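(* For every $a>0$ there is a constant $C$ such that $|v(x)|\le C(1+|x|^{p-a})$ for all $x\notin K$.
   Context: Let $d\ge2$, $\Sigma$ an open connected subset of $\mathbb S^{d-1}$ regular for the Laplace–Beltrami operator $L$, $K=\{t\theta:t>0,\theta\in\Sigma\}$. $\lambda_1>0$ and $m_1>0$ are the principal Dirichlet eigenvalue and eigenfunction ($Lm_1=-\lambda_1m_1$ in $\Sigma$, $m_1=0$ on $\partial\Sigma$), $p=\sqrt{\lambda_1+(d/2-1)^2}-(d/2-1)$, $u(x)=|x|^pm_1(x/|x|)$. Assume $m_1$ extends, as a solution of $Lm_1=-\lambda_1m_1$, to an open connected $\widetilde\Sigma\supset\Sigma$ with ${\rm dist}(\partial\Sigma,\partial\widetilde\Sigma)>0$, so that $u$ (same formula) is harmonic on the cone $\widetilde K$ generated by $\widetilde\Sigma$. For $\eta>0$ let $K^\eta=\{y:|y-x|<\eta|x|\text{ for some }x\in K\}$, with $\eta$ fixed so that $K\subset K^{4\eta}\subset\widetilde K$. For $a>0$ let $G=K^\eta\cap(K\cup\{x\notin K:{\rm dist}(x,\partial K)\le|x|^{1-a}\})$ and $v(x)=u(x)$ for $x\in G$, $v(x)=|x|^{p-a}$ for $x\notin G$. *)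

From HB Require Import structures.
From mathcomp Require Import all_boot all_order all_algebra.
From mathcomp Require Import all_classical all_reals all_analysis.
Set Implicit Arguments. Unset Strict Implicit. Unset Printing Implicit Defensive.
Import Order.TTheory GRing.Theory Num.Theory.
Import numFieldNormedType.Exports.
Local Open Scope classical_set_scope.
Local Open Scope ring_scope.

Section Defs.
Variables (R : realType) (d : nat).
Local Notation V := 'rV[R]_d.

Definition enorm (x : V) : R := Num.sqrt (\sum_(i < d) (x ord0 i) ^+ 2).

Definition sphere : set V := [set x | enorm x = 1].

Definition sphere_open (S : set V) : Prop :=
  S `<=` sphere /\ exists O : set V, open O /\ S = O `&` sphere.

(* boundary of an open subset S of the sphere, relative to the sphere
   (the sphere is closed, so this is closure S minus S) *)
Definition sbd (S : set V) : set V := closure S `\` S.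

Definition bd (A : set V) : set V := closure A `\` interior A.

Definition dist_set (x : V) (A : set V) : R := inf [set enorm (x - y) | y in A].

Definition ebasis (i : 'I_d) : V := delta_mx ord0 i.

Definition hom0 (f : V -> R) : V -> R := fun x => f ((enorm x)^-1 *: x).

Definition laplacian (g : V -> R) (x : V) : R :=
  \sum_(i < d) 'D_(ebasis i) ('D_(ebasis i) g) x.

Definition C2_near (g : V -> R) (x : V) : Prop :=
  \forall y \near x, differentiable g y /\
                     forall v : V, differentiable ('D_v g) y.

(* Laplace-Beltrami operator of the sphere: the Laplacian of the
   0-homogeneous extension, evaluated on the sphere *)
Definition LB (f : V -> R) (th : V) : R := laplacian (hom0 f) th.

Definition eig_solution (U : set V) (f : V -> R) (lam : R) : Prop :=
  forall th, U th -> C2_near (hom0 f) th /\ LB f th = - lam * f th.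

Definition principal_dirichlet (Sig : set V) (lam1 : R) (m1 : V -> R) : Prop :=
  0 < lam1 /\
      eig_solution Sig m1 lam1 /\
      {within closure Sig, continuous m1} /\
      (forall th, Sig th -> 0 < m1 th) /\
      (forall th, sbd Sig th -> m1 th = 0) /\
      (forall (lam : R) (phi : V -> R), lam < lam1 ->
         eig_solution Sig phi lam ->
         {within closure Sig, continuous phi} ->
         (forall th, sbd Sig th -> phi th = 0) ->
         forall th, Sig th -> phi th = 0).

Definition cone (S : set V) : set V :=
  [set y | exists t : R, exists2 th : V, 0 < t /\ S th & y = t *: th].

Definition Keta (K : set V) (eta : R) : set V :=
  [set y | exists2 x, K x & enorm (y - x) < eta * enorm x].

End Defs.

From HB Require Import structures.
From mathcomp Require Import all_boot all_order all_algebra.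
From mathcomp Require Import all_classical all_reals all_analysis.
From mathcomp Require Import ring lra.
Set Implicit Arguments. Unset Strict Implicit.
Import Order.TTheory GRing.Theory Num.Theory.
Import numFieldNormedType.Exports.
Local Open Scope classical_set_scope.
Local Open Scope ring_scope.

(* Write u(x) = |x|^p g(x) with g := hom0 m1, the 0-homogeneous extension of m1.
   Off G we have v(x) = |x|^(p-a), so only the points of G outside K matter. Their
   directions x/|x| lie in a fixed compact neighbourhood of Sig inside the cone over
   Sigt, where g is C^1, hence bounded by M and Lipschitz with constant L along
   segments. For |x| below a threshold r0 this gives |u(x)| <= r0^p M. Beyond r0, x lies
   within 2|x|^(1-a) <= eta |x| / 4 of a point y of the boundary of K, where g vanishes;
   comparing g at x/|x| and y/|x| gives |g(x)| <= 2 L |x|^(-a), i.e.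
   |u(x)| <= 2 L |x|^(p-a). *)

Section EuclideanNorm.
Variables (R : realType) (d : nat).
Local Notation V := 'rV[R]_d.

Lemma sumsq_ge0 (x : V) : 0 <= \sum_(i < d) x ord0 i ^+ 2.
Proof. by apply: sumr_ge0 => i _; exact: sqr_ge0. Qed.

Lemma enorm_ge0 (x : V) : 0 <= enorm x.
Proof. exact: sqrtr_ge0. Qed.

Lemma enorm_sqr (x : V) : enorm x ^+ 2 = \sum_(i < d) x ord0 i ^+ 2.
Proof. by rewrite /enorm sqr_sqrtr // sumsq_ge0. Qed.

Lemma ler_coord_enorm (x : V) i : `|x ord0 i| <= enorm x.
Proof.
rewrite -sqrtr_sqr /enorm ler_sqrt ?sumsq_ge0 //.
by rewrite (bigD1 i) //= lerDl; apply: sumr_ge0 => j _; exact: sqr_ge0.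
Qed.

Lemma enormZ (c : R) (x : V) : enorm (c *: x) = `|c| * enorm x.
Proof.
rewrite /enorm (eq_bigr (fun i => c ^+ 2 * x ord0 i ^+ 2)).
  by rewrite -mulr_sumr sqrtrM ?sqr_ge0 // sqrtr_sqr.
by move=> i _; rewrite mxE exprMn.
Qed.

Lemma enormN (x : V) : enorm (- x) = enorm x.
Proof. by rewrite -scaleN1r enormZ normrN normr1 mul1r. Qed.

Lemma enorm_distC (x y : V) : enorm (x - y) = enorm (y - x).
Proof. by rewrite -enormN opprB. Qed.

Lemma enorm0 : enorm (0 : V) = 0.
Proof. by rewrite -(scale0r (0 : V)) enormZ normr0 mul0r. Qed.

Lemma enorm_eq0 (x : V) : enorm x = 0 -> x = 0.
Proof.
move=> x0; apply/rowP => i; rewrite mxE; apply/eqP; rewrite -normr_eq0.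
by rewrite eq_le normr_ge0 andbT -x0 ler_coord_enorm.
Qed.

Lemma enorm_gt0 (x : V) : x != 0 -> 0 < enorm x.
Proof.
move=> x0; rewrite lt_def enorm_ge0 andbT; apply: contra x0 => /eqP /enorm_eq0 ->.
by [].
Qed.

Lemma ler_dot_enorm (x y : V) :
  \sum_(i < d) x ord0 i * y ord0 i <= enorm x * enorm y.
Proof.
have [->|x0] := eqVneq x 0.
  by rewrite enorm0 mul0r big1 // => i _; rewrite mxE mul0r.
have [->|y0] := eqVneq y 0.
  by rewrite enorm0 mulr0 big1 // => i _; rewrite mxE mulr0.
have [nx ny] := (enorm_gt0 x0, enorm_gt0 y0).
set t := enorm y / enorm x; have t0 : 0 < t by rewrite divr_gt0.
(* termwise AM-GM [2ab <= t a^2 + b^2 / t], summed and optimised in [t] *)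
have amgm a b : 2 * (a * b) <= t * a ^+ 2 + t^-1 * b ^+ 2.
  have e : t * a ^+ 2 + t^-1 * b ^+ 2 - 2 * (a * b) = t^-1 * (t * a - b) ^+ 2.
    by field; rewrite gt_eqF.
  by rewrite -subr_ge0 e mulr_ge0 ?invr_ge0 ?sqr_ge0 ?ltW.
have : 2 * \sum_(i < d) x ord0 i * y ord0 i <=
       t * \sum_(i < d) x ord0 i ^+ 2 + t^-1 * \sum_(i < d) y ord0 i ^+ 2.
  by rewrite !mulr_sumr -big_split /=; apply: ler_sum => i _; exact: amgm.
rewrite -!enorm_sqr /t invf_div.
have -> : enorm y / enorm x * enorm x ^+ 2 + enorm x / enorm y * enorm y ^+ 2 =
          2 * (enorm x * enorm y) by field; rewrite !gt_eqF.
by rewrite ler_pM2l.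
Qed.

Lemma ler_enormD (x y : V) : enorm (x + y) <= enorm x + enorm y.
Proof.
rewrite -(ler_pXn2r (n := 2)) // ?nnegrE ?addr_ge0 ?enorm_ge0 //.
rewrite enorm_sqr (eq_bigr (fun i =>
  x ord0 i ^+ 2 + y ord0 i ^+ 2 + 2 * (x ord0 i * y ord0 i))); last first.
  by move=> i _; rewrite mxE; ring.
rewrite !big_split /= -!enorm_sqr -mulr_sumr.
have := ler_dot_enorm x y; nra.
Qed.

Lemma ler_enorm_dist (x y : V) : `|enorm x - enorm y| <= enorm (x - y).
Proof.
have := ler_enormD (x - y) y; have := ler_enormD (y - x) x.
rewrite !subrK (enorm_distC y) ler_norml; lra.
Qed.

Lemma enorm_segment_lt (c z0 z1 : V) (r s : R) : 0 <= s <= 1 ->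
  enorm (z0 - c) < r -> enorm (z1 - c) < r -> enorm (z0 + s *: (z1 - z0) - c) < r.
Proof.
move=> /andP[s0 s1] h0 h1.
have -> : z0 + s *: (z1 - z0) - c = (1 - s) *: (z0 - c) + s *: (z1 - c).
  by apply/rowP => i; rewrite !mxE; ring.
apply: le_lt_trans (ler_enormD _ _) _.
rewrite !enormZ !ger0_norm ?subr_ge0 //.
set m := Num.max (enorm (z0 - c)) (enorm (z1 - c)).
have : (1 - s) * enorm (z0 - c) <= (1 - s) * m by rewrite ler_wpM2l ?subr_ge0 ?le_max ?lexx.
have : s * enorm (z1 - c) <= s * m by rewrite ler_wpM2l ?le_max ?lexx ?orbT.
have : m < r by rewrite gt_max h0 h1.
lra.
Qed.

Lemma mx_norm_le_enorm (x : V) : `|x| <= enorm x.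
Proof.
rewrite -[`|x|]/(mx_norm x) mx_normrE; apply: bigmax_le => [|[i j] _].
  exact: enorm_ge0.
by rewrite (ord1 i); exact: ler_coord_enorm.
Qed.

Lemma enorm_le_mx_norm (x : V) : enorm x <= d%:R * `|x|.
Proof.
have coord i : `|x ord0 i| <= `|x|.
  rewrite -[`|x|]/(mx_norm x) mx_normrE.
  exact: (le_bigmax _ (fun ij : 'I_1 * 'I_d => `|x ij.1 ij.2|) (ord0, i)).
rewrite -(ler_pXn2r (n := 2)) // ?nnegrE ?mulr_ge0 ?enorm_ge0 //.
rewrite enorm_sqr (@le_trans _ _ (\sum_(i < d) `|x| ^+ 2)) //.
  apply: ler_sum => i _; rewrite -real_normK ?num_real //.
  by rewrite lerXn2r ?nnegrE.
rewrite sumr_const card_ord exprMn -[X in X <= _]mulr_natl; apply: ler_wpM2r; first exact: sqr_ge0.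
case: (d) => [|n]; first by rewrite expr0n.
by rewrite expr2 ler_peMl // ler1n.
Qed.

Lemma nbhs_enorm_lt (z : V) (e : R) : 0 < e -> \forall y \near z, enorm (z - y) < e.
Proof.
move=> e0; have e1 : 0 < e / (d%:R + 1) by rewrite divr_gt0 // ltr_wpDl.
near=> y.
have zy : `|z - y| < e / (d%:R + 1).
  by near: y; apply: (cvgr_dist_lt (fun y => y)); [exact: cvg_id|exact: e1].
apply: le_lt_trans (enorm_le_mx_norm _) _.
apply: (@le_lt_trans _ _ (d%:R * (e / (d%:R + 1)))); first by rewrite ler_wpM2l // ltW.
rewrite mulrA ltr_pdivrMr ?ltr_wpDl //; nra.
Unshelve. all: by end_near.
Qed.

Lemma enorm_continuous : continuous (@enorm R d).
Proof.
move=> x; have FF : Filter (nbhs x) := @nbhs_filter V x.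
apply/cvgrPdist_lt => e e0.
by apply: filterS (nbhs_enorm_lt x e0) => y; apply: le_lt_trans (ler_enorm_dist _ _).
Qed.

End EuclideanNorm.

Section Cones.
Variables (R : realType) (d : nat).
Local Notation V := 'rV[R]_d.

Definition normalize (y : V) : V := (enorm y)^-1 *: y.

Lemma enorm_normalize (y : V) : y != 0 -> enorm (normalize y) = 1.
Proof.
move=> y0; rewrite enormZ ger0_norm ?invr_ge0 ?enorm_ge0 // mulVf //.
by rewrite gt_eqF // enorm_gt0.
Qed.

Lemma normalize_continuous (y : V) : y != 0 -> {for y, continuous normalize}.
Proof.
move=> y0; have FF : Filter (nbhs y) := @nbhs_filter V y.
apply: (@cvgZ R V V (nbhs y) FF (fun z => (enorm z)^-1) id); last exact: cvg_id.
by apply: cvgV; [rewrite gt_eqF // enorm_gt0|exact: enorm_continuous].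
Qed.

Lemma hom0Z (f : V -> R) (c : R) (y : V) : 0 < c -> hom0 f (c *: y) = hom0 f y.
Proof.
move=> c0; rewrite /hom0 enormZ gtr0_norm // scalerA.
have [->|y0] := eqVneq y 0; first by rewrite !scaler0.
by rewrite invfM mulrAC mulVf ?gt_eqF // mul1r.
Qed.

Lemma sub_cone (S : set V) : S `<=` @sphere R d -> S `<=` cone S.
Proof. by move=> _ th Sth; exists 1, th; [split|rewrite scale1r]. Qed.

Lemma coneP (S : set V) (z : V) : S `<=` @sphere R d ->
  cone S z <-> z != 0 /\ S (normalize z).
Proof.
move=> Ssp; split=> [[t [th [t0 Sth] ->]]|[z0 Sz]].
  have th1 : enorm th = 1 := Ssp th Sth.
  have tth0 : t *: th != 0.
    rewrite scaler_eq0 gt_eqF //=; apply: contra_eqN th1 => /eqP ->.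
    by rewrite enorm0 eq_sym oner_neq0.
  split=> //; rewrite /normalize enormZ th1 mulr1 gtr0_norm // scalerA.
  by rewrite mulVf ?gt_eqF // scale1r.
exists (enorm z), (normalize z); first by split=> //; exact: enorm_gt0.
by rewrite /normalize scalerA mulfV ?scale1r // gt_eqF // enorm_gt0.
Qed.

Lemma open_cone (S : set V) : sphere_open S -> open (cone S).
Proof.
move=> [Ssp [U [oU SE]]]; rewrite openE => z Kz.
have [z0 Sz] := (coneP z Ssp).1 Kz.
have Unz : nbhs (normalize z) U.
  by apply: open_nbhs_nbhs; split=> //; rewrite SE in Sz; case: Sz.
have Uz : nbhs z (normalize @^-1` U) by exact: normalize_continuous Unz.
apply: filterS (filterI Uz (nbhs_enorm_lt z (enorm_gt0 z0))) => y [Uy zy].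
have y0 : y != 0 by apply: contraTneq zy => ->; rewrite subr0 ltxx.
by apply/(coneP y Ssp); split=> //; rewrite SE; split=> //; exact: enorm_normalize.
Qed.

Lemma bd_cone0 (S : set V) (th0 : V) : S `<=` @sphere R d -> S th0 ->
  bd (cone S) 0.
Proof.
move=> Ssp Sth0; split; last first.
  by move=> /nbhs_singleton /(coneP 0 Ssp) []; rewrite eqxx.
move=> U /nbhs_ballP [e /= e0 eU]; exists ((e / 2) *: th0); split.
  by exists (e / 2), th0 => //; split=> //; exact: divr_gt0.
apply: eU; rewrite mx_norm_ball /ball_ /=.
apply: le_lt_trans (mx_norm_le_enorm _) _.
rewrite sub0r enormN enormZ (Ssp _ Sth0) mulr1 gtr0_norm ?divr_gt0 //; lra.
Qed.

Lemma bd_cone_normalize (S : set V) (y : V) : sphere_open S ->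
  bd (cone S) y -> y != 0 -> sbd S (normalize y).
Proof.
move=> So [cly niy] y0; split.
  move=> U /(normalize_continuous y0) /cly [k [Kk Uk]].
  by exists (normalize k); split=> //; have [] := (coneP k So.1).1 Kk.
move=> Sy; apply: niy; have Ky : cone S y by apply/(coneP y So.1).
by move: (open_cone So); rewrite openE => /(_ _ Ky).
Qed.

Lemma hom0_derive_scale (f : V -> R) (t : R) (w y : V) : 0 < t ->
  'D_w (hom0 f) y = 'D_(t^-1 *: w) (hom0 f) (t^-1 *: y).
Proof.
move=> t0; rewrite /derive.
suff -> : (fun h : R => h^-1 *: ((hom0 f \o shift y) (h *: w) - hom0 f y)) =
  (fun h : R => h^-1 *: ((hom0 f \o shift (t^-1 *: y)) (h *: (t^-1 *: w)) -
                         hom0 f (t^-1 *: y))) by [].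
apply: funext => h /=; rewrite /shift [h *: (t^-1 *: w)]scalerA [h * _]mulrC.
by rewrite -scalerA -scalerDr !hom0Z // invr_gt0.
Qed.

Lemma eig_solution_C1_cone (T : set V) (f : V -> R) (lam : R) (z : V) :
  eig_solution T f lam -> cone T z ->
  differentiable (hom0 f) z /\ forall w, {for z, continuous ('D_w (hom0 f))}.
Proof.
move=> eig [t [th [t0 Tth] ->]].
have [dth dDth] := nbhs_singleton (eig th Tth).1.
have scaleK : t^-1 *: (t *: th) = th by rewrite scalerA mulVf ?gt_eqF // scale1r.
have hom0E : hom0 f = hom0 f \o *:%R t^-1.
  by apply: funext => y /=; rewrite hom0Z // invr_gt0.
split=> [|w].
  by rewrite hom0E; apply: differentiable_comp; [exact: ex_diff|rewrite scaleK].
have -> : 'D_w (hom0 f) = 'D_(t^-1 *: w) (hom0 f) \o *:%R t^-1.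
  by apply: funext => y; exact: hom0_derive_scale.
apply: continuous_comp; first exact: scaler_continuous.
by rewrite /= scaleK; apply: differentiable_continuous.
Qed.

End Cones.

Section MeanValue.
Variables (R : realType) (d : nat).
Local Notation V := 'rV[R]_d.

Lemma ler_derive_partials (g : V -> R) (z w : V) (M : 'I_d -> R) :
  differentiable g z -> (forall i, `|'D_(ebasis R i) g z| <= M i) ->
  `|'D_w g z| <= (\sum_(i < d) M i) * enorm w.
Proof.
move=> dg gM; rewrite deriveE // {1}(row_sum_delta w) linear_sum mulr_suml.
apply: le_trans (ler_norm_sum _ _ _) _; apply: ler_sum => i _.
rewrite linearZ /= -deriveE // normrM mulrC.
by apply: ler_pM => //; [exact: gM|exact: ler_coord_enorm].
Qed.

Lemma lipschitz_segment (g : V -> R) (A : set V) (M : 'I_d -> R) (z0 z1 : V) :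
  (forall s, 0 <= s <= 1 -> A (z0 + s *: (z1 - z0))) ->
  (forall z, A z -> differentiable g z) ->
  (forall z i, A z -> `|'D_(ebasis R i) g z| <= M i) ->
  `|g z1 - g z0| <= (\sum_(i < d) M i) * enorm (z1 - z0).
Proof.
move=> segA dgA gM; set w := z1 - z0.
pose P s : V := z0 + s *: w; pose h s := g (P s).
have hder (s : R) : 0 <= s <= 1 -> is_derive s 1 h ('D_w g (P s)).
  move=> /segA PsA.
  have quotE : (fun e : R => e^-1 *: ((h \o shift s) (e *: 1) - h s)) =
               (fun e : R => e^-1 *: ((g \o shift (P s)) (e *: w) - g (P s))).
    apply: funext => e; rewrite /h /P /shift /=.
    by rewrite scalerDl -[e%:A]/(e * 1) mulr1 addrCA.
  have dh : derivable h s 1 by rewrite /derivable quotE; exact: diff_derivable (dgA _ PsA).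
  have -> : 'D_w g (P s) = 'D_1 h s by rewrite /derive quotE.
  exact: derivableP.
have hcont : {within `[0, 1], continuous h}.
  apply: continuous_in_subspaceT => s; rewrite inE /= in_itv /= => s01.
  apply: continuous_comp; last exact: differentiable_continuous (dgA _ (segA _ s01)).
  by apply: cvgD; [exact: cvg_cst|apply: cvgZr_tmp; exact: cvg_id].
have [c c01 hE] : exists2 c, c \in `[0, 1] & h 1 - h 0 = 'D_w g (P c) * (1 - 0).
  apply: MVT_segment ler01 _ hcont => s; rewrite in_itv /= => /andP[s0 s1].
  by apply: hder; rewrite !ltW.
have {}c01 : 0 <= c <= 1 by move: c01; rewrite in_itv.
have h1 : h 1 = g z1 by rewrite /h /P scale1r addrC subrK.
have h0 : h 0 = g z0 by rewrite /h /P scale0r addr0.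
move: hE; rewrite h1 h0 subr0 mulr1 => ->.
by apply: ler_derive_partials; [exact: dgA (segA _ c01)|move=> i; exact: gM (segA _ c01)].
Qed.

Lemma compact_bounded_fun (A : set V) (f : V -> R) : compact A ->
  (forall z, A z -> {for z, continuous f}) ->
  exists2 M, 0 <= M & forall z, A z -> `|f z| <= M.
Proof.
move=> cA cf.
have cfA : compact (f @` A).
  by apply: continuous_compact => //; apply: continuous_in_subspaceT => z /[!inE] /cf.
have [M0 [M0R fAM]] := compact_bounded cfA.
exists (`|M0| + 1); first by rewrite addr_ge0.
move=> z Az; apply: (fAM (`|M0| + 1)); last by exists z.
by apply: le_lt_trans (real_ler_norm M0R) _; rewrite ltrDl.
Qed.

Lemma compact_C1_lipschitz (A : set V) (g : V -> R) : compact A ->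
  (forall z, A z -> differentiable g z /\ forall w, {for z, continuous ('D_w g)}) ->
  exists M L, [/\ 0 <= M, 0 <= L, forall z, A z -> `|g z| <= M &
    forall z0 z1, (forall s, 0 <= s <= 1 -> A (z0 + s *: (z1 - z0))) ->
      `|g z1 - g z0| <= L * enorm (z1 - z0)].
Proof.
move=> cA gC1.
have [M M0 gM] := compact_bounded_fun cA
  (fun z Az => differentiable_continuous (gC1 z Az).1).
have /choice [Mi Mi_spec] : forall i : 'I_d, exists M,
    0 <= M /\ forall z, A z -> `|'D_(ebasis R i) g z| <= M.
  move=> i; have [N N0 DN] := compact_bounded_fun cA (fun z Az => (gC1 z Az).2 (ebasis R i)).
  by exists N.
exists M, (\sum_(i < d) Mi i); split=> //.
  by apply: sumr_ge0 => i _; exact: (Mi_spec i).1.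
move=> z0 z1 segA; apply: lipschitz_segment segA _ _.
  by move=> z Az; exact: (gC1 z Az).1.
by move=> z i Az; exact: (Mi_spec i).2.
Qed.

End MeanValue.

Lemma powR_decay (R : realType) (a e : R) : 0 < a -> 0 < e ->
  exists2 r0, 0 < r0 & forall r : R, r0 <= r -> r `^ (- a) <= e.
Proof.
move=> a0 e0; have e'0 : 0 < e^-1 by rewrite invr_gt0.
exists (e^-1 `^ a^-1) => [|r r0r]; first exact: powR_gt0.
have r0 : 0 < r := lt_le_trans (powR_gt0 _ e'0) r0r.
have : e^-1 <= r `^ a.
  rewrite -[e^-1](@powRr1 _ _ (ltW e'0)) -(mulVf (lt0r_neq0 a0)) powRrM.
  by rewrite ge0_ler_powR ?nnegrE ?powR_ge0 ?(ltW a0) ?(ltW r0).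
by move=> ea; rewrite powRN -[e]invrK lef_pV2 ?posrE ?invr_gt0 ?powR_gt0.
Qed.

Lemma sqrt_addsqr_subr_gt0 (R : realType) (l c : R) :
  0 < l -> 0 < Num.sqrt (l + c ^+ 2) - c.
Proof.
move=> l0; rewrite subr_gt0 (le_lt_trans (ler_norm c)) // -sqrtr_sqr.
by rewrite ltr_sqrt ?ltrDr //; have := sqr_ge0 c; lra.
Qed.

Section ConeGeometry.
Variables (R : realType) (d : nat).
Local Notation V := 'rV[R]_d.

Lemma dist_set_ltP (x : V) (B : set V) (e : R) : B !=set0 ->
  dist_set x B < e -> exists2 y, B y & enorm (x - y) < e.
Proof.
move=> [y0 By0] xB.
have [|_ [y By <-] xy] := inf_lt _ xB; last by exists y.
by exists (enorm (x - y0)), y0.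
Qed.

Lemma Keta_cone_le1 (S T : set V) (c : R) (th0 : V) :
  S `<=` @sphere R d -> T `<=` @sphere R d -> S th0 ->
  Keta (cone S) c `<=` cone T -> c <= 1.
Proof.
move=> Ssp Tsp Sth0 KT; rewrite leNgt; apply/negP => c1.
suff /(coneP 0 Tsp) [] : cone T 0 by rewrite eqxx.
apply: KT; exists th0; first exact: sub_cone.
by rewrite sub0r enormN (Ssp _ Sth0) mulr1.
Qed.

Lemma Keta_cone_normalize (S : set V) (eta : R) (x : V) :
  S `<=` @sphere R d -> 4 * eta <= 1 -> Keta (cone S) eta x ->
  x != 0 /\ exists2 th, S th & enorm (normalize x - th) < 8 / 3 * eta.
Proof.
move=> Ssp eta4 [_ [t [th [t0 Sth] ->]] xk].
have th1 : enorm th = 1 := Ssp _ Sth.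
rewrite enormZ th1 mulr1 gtr0_norm // in xk.
have := ler_enorm_dist x (t *: th); rewrite enormZ th1 mulr1 (gtr0_norm t0).
set r := enorm x => rt; have := rt; rewrite ler_norml => /andP[rt1 rt2].
have eta0 : 0 < eta by have := enorm_ge0 (x - t *: th); nra.
have r0 : 0 < r by nra.
have x0 : x != 0 by apply: contraTneq r0 => x0; rewrite /r x0 enorm0 ltxx.
split=> //; exists th => //.
have xr : enorm (x - r *: th) <= 2 * enorm (x - t *: th).
  have -> : x - r *: th = (x - t *: th) + (t - r) *: th.
    by apply/rowP => i; rewrite !mxE; ring.
  by apply: le_trans (ler_enormD _ _) _; rewrite enormZ th1 mulr1 distrC; lra.
have -> : normalize x - th = r^-1 *: (x - r *: th).
  by rewrite scalerBr scalerA mulVf ?gt_eqF // scale1r.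
rewrite enormZ gtr0_norm ?invr_gt0 // mulrC ltr_pdivrMr //; nra.
Qed.

End ConeGeometry.

Section Estimate.
Variables (R : realType) (d : nat) (Sig Sigt : set 'rV[R]_d).
Variables (m1 : 'rV[R]_d -> R) (lam eta : R).
Local Notation V := 'rV[R]_d.
Local Notation g := (hom0 m1).
Hypotheses (Sig_open : sphere_open Sig) (Sigt_sphere : Sigt `<=` @sphere R d).
Hypotheses (m1_eig : eig_solution Sigt m1 lam) (m1_bd : forall th, sbd Sig th -> m1 th = 0).
Hypotheses (eta_gt0 : 0 < eta) (Keta_sub : Keta (cone Sig) (4 * eta) `<=` cone Sigt).

Lemma hom0_estimate_near_boundary (th0 : V) : Sig th0 ->
  exists M L, [/\ 0 <= M, 0 <= L & forall x, Keta (cone Sig) eta x ->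
    [/\ x != 0, `|g x| <= M & forall y, bd (cone Sig) y ->
        enorm (x - y) < eta / 4 * enorm x -> `|g x| <= L * (enorm (x - y) / enorm x)]].
Proof.
(* [lra] ignores section hypotheses, hence the local copy [eta0]. *)
move=> Sth0; have Ssp := Sig_open.1; have eta0 := eta_gt0.
have eta4 : 4 * eta <= 1 := Keta_cone_le1 Ssp Sigt_sphere Sth0 Keta_sub.
pose B := [set z : V | exists2 k, Sig k & enorm (z - k) < 7 / 2 * eta].
have Bclose z : closure B z -> exists2 k, Sig k & enorm (z - k) < 4 * eta.
  have eta2 : 0 < eta / 2 by rewrite divr_gt0.
  move=> /(_ _ (nbhs_enorm_lt z eta2)) [b [[k Sk bk] zb]]; exists k => //.
  have -> : z - k = (z - b) + (b - k) by rewrite addrA subrK.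
  by apply: le_lt_trans (ler_enormD _ _) _; move: zb => /=; lra.
have Bcone z : closure B z -> cone Sigt z.
  move=> /Bclose [k Sk zk]; apply: Keta_sub; exists k; first exact: sub_cone.
  by rewrite (Ssp _ Sk) mulr1.
have Bcompact : compact (closure B).
  apply: bounded_closed_compact; last exact: closed_closure.
  exists 2; split; first exact: num_real.
  move=> N N2 z /Bclose [k Sk zk] /=; apply: le_trans (mx_norm_le_enorm _) _.
  by have := ler_enormD (z - k) k; rewrite subrK (Ssp _ Sk); lra.
have [M [L [M0 L0 gM gL]]] := compact_C1_lipschitz Bcompact
  (fun z Bz => eig_solution_C1_cone m1_eig (Bcone z Bz)).
exists M, L; split=> // x Kx.
have [x0 [th Sth xth]] := Keta_cone_normalize Ssp eta4 Kx.
have r0 := enorm_gt0 x0.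
have gx : g (normalize x) = g x by rewrite hom0Z ?invr_gt0.
have Bx : closure B (normalize x).
  apply: subset_closure; exists th => //.
  lra.
split=> // [|y bdy xy]; first by rewrite -gx; exact: gM.
have y0 : y != 0 by apply: contraTneq xy => ->; rewrite subr0 -leNgt; nra.
set w := (enorm x)^-1 *: y.
have gw : g w = 0.
  by rewrite hom0Z ?invr_gt0 //; exact: m1_bd (bd_cone_normalize Sig_open bdy y0).
have xw : enorm (normalize x - w) = enorm (x - y) / enorm x.
  by rewrite -scalerBr enormZ gtr0_norm ?invr_gt0 // mulrC.
have seg s : 0 <= s <= 1 -> closure B (w + s *: (normalize x - w)).
  move=> s01; apply: subset_closure; exists th => //.
  apply: enorm_segment_lt s01 _ _; last lra.
  have := ler_enormD (w - normalize x) (normalize x - th).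
  rewrite addrA subrK (enorm_distC w (normalize x)) xw.
  have : enorm (x - y) / enorm x < eta / 4 by rewrite ltr_pdivrMr.
  lra.
by have := gL _ _ seg; rewrite gw subr0 gx xw.
Qed.

Variables (p a : R).
Hypotheses (p_ge0 : 0 <= p) (a_gt0 : 0 < a).

Lemma hom0_power_estimate : exists2 C, 1 <= C & forall x,
  Keta (cone Sig) eta x -> dist_set x (bd (cone Sig)) <= enorm x `^ (1 - a) ->
  `|enorm x `^ p * g x| <= C * (1 + enorm x `^ (p - a)).
Proof.
have [[th0 Sth0]|Sig0] := pselect (exists th, Sig th); last first.
  by exists 1 => // x [_ [t [th [_ Sth] _]] _]; case: Sig0; exists th.
have [M [L [M0 L0 gML]]] := hom0_estimate_near_boundary Sth0.
have eta8 : 0 < eta / 8 by rewrite divr_gt0.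
have [r0 r0_gt0 decay] := powR_decay a_gt0 eta8.
have [C CE] : exists C, C = 1 + r0 `^ p * M + 2 * L by eexists.
have C1 : 1 <= C by have := mulr_ge0 (powR_ge0 r0 p) M0; lra.
exists C => // x Kx xbd; have [x0 gM gL] := gML x Kx; set r := enorm x.
have r_gt0 : 0 < r := enorm_gt0 x0.
have Cq : 0 <= C * r `^ (p - a) by rewrite mulr_ge0 ?powR_ge0 // (le_trans ler01).
rewrite normrM ger0_norm ?powR_ge0 // mulrDr mulr1.
have [rr0|r0r] := ltP r r0.
  have : r `^ p * `|g x| <= r0 `^ p * M.
    by rewrite ler_pM ?powR_ge0 // ge0_ler_powR ?nnegrE ?(ltW r_gt0) ?(ltW rr0) ?(ltW r0_gt0).
  lra.
have ra_gt0 : 0 < r `^ (- a) := powR_gt0 _ r_gt0.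
have r1a : r `^ (1 - a) = r * r `^ (- a).
  by rewrite powRD ?powRr1 ?(ltW r_gt0) // (gt_eqF r_gt0) implybT.
have [y bdy xy] : exists2 y, bd (cone Sig) y & enorm (x - y) < 2 * r `^ (1 - a).
  apply: dist_set_ltP; first by exists 0; exact: bd_cone0 Sig_open.1 Sth0.
  by apply: le_lt_trans xbd _; rewrite r1a ltr_pMl ?mulr_gt0 // ltr1n.
rewrite r1a in xy; have := decay r r0r => decay_r.
have xy_r : enorm (x - y) / r < 2 * r `^ (- a) by rewrite ltr_pdivrMr //; nra.
have xy4 : enorm (x - y) < eta / 4 * r by nra.
have gx : `|g x| <= L * (2 * r `^ (- a)).
  by apply: le_trans (gL y bdy xy4) _; rewrite ler_wpM2l // ltW.
have -> : r `^ (p - a) = r `^ p * r `^ (- a).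
  by rewrite powRD // (gt_eqF r_gt0) implybT.
have rpa_ge0 : 0 <= r `^ p * r `^ (- a) by rewrite mulr_ge0 ?powR_ge0.
have : r `^ p * `|g x| <= r `^ p * (L * (2 * r `^ (- a))) by rewrite ler_wpM2l ?powR_ge0.
have : 2 * L * (r `^ p * r `^ (- a)) <= C * (r `^ p * r `^ (- a)).
  by rewrite ler_wpM2r //; have := mulr_ge0 (powR_ge0 r0 p) M0; lra.
lra.
Qed.

End Estimate.

Theorem lemma4 (R : realType) (d : nat) (Sig Sigt : set 'rV[R]_d)
    (lam1 : R) (m1 : 'rV[R]_d -> R) (eta : R) :
  (2 <= d)%N ->
  sphere_open Sig -> connected Sig ->
  principal_dirichlet Sig lam1 m1 ->
  sphere_open Sigt -> connected Sigt -> Sig `<=` Sigt ->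
  (exists2 delta : R, 0 < delta &
     forall x y, sbd Sig x -> sbd Sigt y -> delta <= enorm (x - y)) ->
  eig_solution Sigt m1 lam1 ->
  0 < eta ->
  cone Sig `<=` Keta (cone Sig) (4 * eta) ->
  Keta (cone Sig) (4 * eta) `<=` cone Sigt ->
  let p := Num.sqrt (lam1 + (d%:R / 2 - 1) ^+ 2) - (d%:R / 2 - 1) in
  let u := fun x : 'rV[R]_d => enorm x `^ p * m1 ((enorm x)^-1 *: x) in
  forall a : R, 0 < a ->
  let G := Keta (cone Sig) eta `&`
           (cone Sig `|` [set x | ~ cone Sig x /\
                                  dist_set x (bd (cone Sig)) <= enorm x `^ (1 - a)]) in
  let v := fun x => if `[< G x >] then u x else enorm x `^ (p - a) in
  exists C : R, forall x, ~ cone Sig x -> `|v x| <= C * (1 + enorm x `^ (p - a)).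
Proof.
move=> _ Sig_open _ [lam1_gt0 [_ [_ [_ [m1_bd _]]]]] Sigt_open _ _ _ m1_eig eta_gt0 _
  Keta_sub p u a a_gt0 G v.
have p_gt0 : 0 < p := sqrt_addsqr_subr_gt0 _ lam1_gt0.
have [C C1 uC] := hom0_power_estimate Sig_open Sigt_open.1 m1_eig m1_bd eta_gt0
  Keta_sub (ltW p_gt0) a_gt0.
exists C => x nKx; rewrite /v; case: asboolP => [[Kx [//|[_ xbd]]]|_].
  exact: uC.
rewrite ger0_norm ?powR_ge0 //; have := powR_ge0 (enorm x) (p - a); nra.
Qed.
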